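(* Let $a<b$ be real, $L:=b-a$, and for real $x$ and real $x_1\ne x_2$ define $$V(x,x_1,x_2):=\frac{e^{-2|x_1-x|}+e^{-2|x_2-x|}-2e^{-(|x_1-x|+|x_2-x|+|x_1-x_2|)}}{1-e^{-2|x_1-x_2|}}.$$ Let $q:=\frac{-e^{-L}+\sqrt{e^{-2L}+8e^{-L}}}{2}$. Then $$\sup_{x_1,x_2\in\mathbb{R},\,x_1\ne x_2}\ \min_{x\in[a,b]}V(x,x_1,x_2)=q,$$ and the supremum is attained at $x_1=a-\tfrac12\ln q$, $x_2=b+\tfrac12\ln q$ (which satisfy $a\le x_1<x_2\le b$).
   Context: For the exponential kernel $K(x,y)=e^{-|x-y|}$ on $\mathbb{R}$ and $\mathcal{X}=\{x_1,x_2\}$, $V(x,x_1,x_2)$ equals $K(x,x)-\operatorname{dist}^2(K(x,\cdot),\operatorname{span}\{K(x_1,\cdot),K(x_2,\cdot)\})$ in the RKHS of $K$, so maximizing $\min_{x\in[a,b]}V$ is minimizing the worst-case reconstruction error on $[a,b]$ measured in the maximum norm. *)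

From Stdlib Require Import Reals Lra.
Open Scope R_scope.

Definition V (x x1 x2 : R) : R :=
  (exp (-2 * Rabs (x1 - x)) + exp (-2 * Rabs (x2 - x))
   - 2 * exp (- (Rabs (x1 - x) + Rabs (x2 - x) + Rabs (x1 - x2))))
  / (1 - exp (-2 * Rabs (x1 - x2))).

Definition qval (a b : R) : R :=
  let L := b - a in
  (- exp (- L) + sqrt (exp (-2 * L) + 8 * exp (- L))) / 2.

Definition is_min_of (E : R -> Prop) (m : R) : Prop :=
  E m /\ forall y, E y -> m <= y.

Definition Vvals (a b x1 x2 : R) : R -> Prop :=
  fun y => exists x, a <= x <= b /\ y = V x x1 x2.

Definition minV (a b x1 x2 m : R) : Prop := is_min_of (Vvals a b x1 x2) m.

(* For x1 < x2 write A = exp(-2(x-x1)), B = exp(-2(x2-x)).  Outside [x1,x2]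
   V(x) = exp(-2 dist(x,{x1,x2})); inside, V(x) = (A+B-2AB)/(1-AB) with
   AB = exp(-2(x2-x1)).  Two elementary inequalities about this expression
   sandwich it between phi(exp(-(x2-x1))) and phi(exp(-2t)), where
   phi(c) = 2c/(1+c) and t is the distance from x to the nearer of x1, x2.

   With E = exp(-(b-a)), the number q = qval a b is the positive root of
   q^2 + E q = 2E, i.e. phi(E/q) = q.  Put s = -ln(q)/2 and t = (b-a)/2 - s.
   - Upper bound: a purely metric covering argument shows that, for any pair
     x1 < x2, some x in [a,b] lies either at distance >= s outside [x1,x2]
     (there V <= exp(-2s) = q) or at distance >= t from both ends inside it
     (there V <= phi(exp(-2t)) = phi(E/q) = q).
   - Attainment: for x1 = a + s, x2 = b - s every x in [a,b] has V(x) >= q,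
     with equality at x = a.
   Continuity of V gives existence of the minimum, and the theorem follows. *)
From Stdlib Require Import Reals Lra.
Open Scope R_scope.

(* phi(c) = 2c/(1+c): the value of V at the midpoint of a pair x1 < x2 with
   c = exp(-(x2-x1)). *)
Definition mid_value (c : R) : R := 2 * c / (1 + c).

(* V between the two nodes, written in terms of A = exp(-2(x-x1)) and
   B = exp(-2(x2-x)). *)
Definition pair_value (A B : R) : R := (A + B - 2 * (A * B)) / (1 - A * B).

Definition far (x1 x2 s t x : R) : Prop :=
  (x <= x1 /\ s <= x1 - x) \/ (x2 <= x /\ s <= x - x2) \/
  (t <= x - x1 /\ t <= x2 - x).

Lemma exp_le (u v : R) : u <= v -> exp u <= exp v.
Proof. intros [H | ->]; [left; apply exp_increasing | right]; auto. Qed.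

Lemma exp_lt_1 (u : R) : u < 0 -> exp u < 1.
Proof. intros H. rewrite <- exp_0. apply exp_increasing; lra. Qed.

(* pair_value is bounded above by its value on the diagonal (c,c):
   the difference, cross-multiplied, is (c-A)(1-B) + (c-B)(1-A). *)
Lemma pair_value_le_mid (A B c : R) :
  0 < A -> 0 < B -> A <= c -> B <= c -> c <= 1 -> A * B < 1 ->
  pair_value A B <= mid_value c.
Proof.
  intros hA hB hAc hBc hc1 hAB. unfold pair_value, mid_value.
  apply Rmult_le_reg_r with ((1 - A * B) * (1 + c)); [nra|].
  replace ((A + B - 2 * (A * B)) / (1 - A * B) * ((1 - A * B) * (1 + c)))
    with ((A + B - 2 * (A * B)) * (1 + c)) by (field; lra).
  replace (2 * c / (1 + c) * ((1 - A * B) * (1 + c)))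
    with (2 * c * (1 - A * B)) by (field; lra).
  assert (0 <= (c - A) * (1 - B)) by nra.
  assert (0 <= (c - B) * (1 - A)) by nra.
  nra.
Qed.

(* For a fixed product AB = r^2, pair_value is minimal at A = B = r
   (AM-GM: A + B >= 2r). *)
Lemma mid_le_pair_value (A B r : R) :
  0 < A -> 0 < B -> 0 < r -> r < 1 -> A * B = r * r ->
  mid_value r <= pair_value A B.
Proof.
  intros hA hB hr hr1 hAB. unfold pair_value, mid_value. rewrite hAB.
  assert (hsum : 2 * r <= A + B).
  { destruct (Rle_lt_dec (2 * r) (A + B)) as [h | h]; [exact h|].
    assert ((A + B) * (A + B) < (2 * r) * (2 * r))
      by (apply Rmult_le_0_lt_compat; lra).
    pose proof (Rle_0_sqr (A - B)). unfold Rsqr in *. nra. }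
  apply Rmult_le_reg_r with ((1 - r * r) * (1 + r)); [nra|].
  replace (2 * r / (1 + r) * ((1 - r * r) * (1 + r)))
    with (2 * r * (1 - r * r)) by (field; lra).
  replace ((A + B - 2 * (r * r)) / (1 - r * r) * ((1 - r * r) * (1 + r)))
    with ((A + B - 2 * (r * r)) * (1 + r)) by (field; nra).
  nra.
Qed.

Lemma V_sym (x x1 x2 : R) : V x x1 x2 = V x x2 x1.
Proof.
  unfold V. rewrite (Rabs_minus_sym x1 x2).
  f_equal. f_equal; [ring|]. f_equal. f_equal. ring.
Qed.

Lemma V_reflect (x x1 x2 : R) : V (- x) (- x2) (- x1) = V x x1 x2.
Proof.
  unfold V.
  replace (- x2 - - x) with (- (x2 - x)) by ring.
  replace (- x1 - - x) with (- (x1 - x)) by ring.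
  replace (- x2 - - x1) with (x1 - x2) by ring.
  rewrite !Rabs_Ropp. f_equal. f_equal; [ring|]. f_equal. f_equal. ring.
Qed.

Lemma V_left (x x1 x2 : R) : x1 < x2 -> x <= x1 -> V x x1 x2 = exp (-2 * (x1 - x)).
Proof.
  intros h12 hx. unfold V.
  rewrite (Rabs_right (x1 - x)), (Rabs_right (x2 - x)), (Rabs_left (x1 - x2)) by lra.
  set (P := exp (-2 * (x1 - x))).
  set (R := exp (-2 * - (x1 - x2))).
  assert (hR : R < 1) by (apply exp_lt_1; lra).
  replace (exp (-2 * (x2 - x))) with (P * R)
    by (unfold P, R; rewrite <- exp_plus; f_equal; ring).
  replace (exp (- (x1 - x + (x2 - x) + - (x1 - x2)))) with (P * R)
    by (unfold P, R; rewrite <- exp_plus; f_equal; ring).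
  field. lra.
Qed.

Lemma V_right (x x1 x2 : R) : x1 < x2 -> x2 <= x -> V x x1 x2 = exp (-2 * (x - x2)).
Proof.
  intros h12 hx. rewrite <- V_reflect, V_left by lra.
  f_equal. ring.
Qed.

Lemma V_between (x x1 x2 : R) : x1 <= x <= x2 ->
  V x x1 x2 = pair_value (exp (-2 * (x - x1))) (exp (-2 * (x2 - x))).
Proof.
  intros hx. unfold V, pair_value.
  rewrite (Rabs_left1 (x1 - x)), (Rabs_right (x2 - x)), (Rabs_left1 (x1 - x2)) by lra.
  replace (exp (-2 * (x - x1)) * exp (-2 * (x2 - x)))
    with (exp (-2 * - (x1 - x2))) by (rewrite <- exp_plus; f_equal; ring).
  replace (- (- (x1 - x) + (x2 - x) + - (x1 - x2))) with (-2 * - (x1 - x2)) by ring.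
  replace (-2 * - (x1 - x)) with (-2 * (x - x1)) by ring.
  reflexivity.
Qed.

Lemma mid_le_V (x x1 x2 : R) : x1 < x2 -> x1 <= x <= x2 ->
  mid_value (exp (- (x2 - x1))) <= V x x1 x2.
Proof.
  intros h12 hx. rewrite V_between by lra.
  apply mid_le_pair_value; try apply exp_pos.
  - apply exp_lt_1; lra.
  - rewrite <- !exp_plus. f_equal. ring.
Qed.

Lemma V_le_of_far (x x1 x2 s t m : R) : x1 < x2 -> 0 <= t ->
  exp (-2 * s) <= m -> mid_value (exp (-2 * t)) <= m ->
  far x1 x2 s t x -> V x x1 x2 <= m.
Proof.
  intros h12 ht hs hm [[hx hd] | [[hx hd] | [hd1 hd2]]].
  - rewrite V_left by lra. eapply Rle_trans; [apply exp_le | exact hs]. lra.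
  - rewrite V_right by lra. eapply Rle_trans; [apply exp_le | exact hs]. lra.
  - rewrite V_between by lra. eapply Rle_trans; [|exact hm].
    assert (exp (- (x2 - x1)) < 1) by (apply exp_lt_1; lra).
    apply pair_value_le_mid; try apply exp_pos; try (apply exp_le; lra).
    + rewrite <- exp_0. apply exp_le. lra.
    + rewrite <- exp_plus. apply exp_lt_1. lra.
Qed.

(* Covering: if 2(s+t) <= b-a, no pair x1 < x2 can be close to every point
   of [a,b]; try a, then b, then the midpoint clamped to [a,b]. *)
Lemma exists_far_point (a b x1 x2 s t : R) :
  a < b -> x1 < x2 -> 0 <= s -> 0 <= t -> 2 * (s + t) <= b - a ->
  exists x, a <= x <= b /\ far x1 x2 s t x.
Proof.
  intros hab h12 hs ht hL. unfold far.
  destruct (Rle_lt_dec s (x1 - a)) as [ha | ha].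
  { exists a. split; lra. }
  destruct (Rle_lt_dec s (b - x2)) as [hb | hb].
  { exists b. split; lra. }
  destruct (Rle_lt_dec a ((x1 + x2) / 2)) as [hma | hma];
    [destruct (Rle_lt_dec ((x1 + x2) / 2) b) as [hmb | hmb]|].
  - exists ((x1 + x2) / 2). split; lra.
  - exists b. split; lra.
  - exists a. split; lra.
Qed.

Lemma V_continuous (x1 x2 : R) : continuity (fun x => V x x1 x2).
Proof.
  assert (hexp : continuity exp) by (apply derivable_continuous, derivable_exp).
  assert (hdist : forall c, continuity (fun x => Rabs (c - x))).
  { intros c. change (continuity (comp Rabs (fun x => c - x))).
    apply continuity_comp; [apply derivable_continuous; reg | apply Rcontinuity_abs]. }
  assert (hkern : forall c k, continuity (fun x => exp (k * Rabs (c - x)))).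
  { intros c k.
    change (continuity (comp exp (comp (fun y => k * y) (fun x => Rabs (c - x))))).
    apply continuity_comp; [|exact hexp].
    apply continuity_comp; [apply hdist | apply derivable_continuous; reg]. }
  assert (hconst : forall k : R, continuity (fun _ => k))
    by (intros k; apply continuity_const; intros ? ?; reflexivity).
  unfold V, Rdiv. apply continuity_mult; [|apply hconst].
  apply continuity_minus; [apply continuity_plus; apply hkern|].
  apply continuity_scal.
  change (continuity (comp exp (fun x => - (Rabs (x1 - x) + Rabs (x2 - x) + Rabs (x1 - x2))))).
  apply continuity_comp; [|exact hexp].
  apply continuity_opp, continuity_plus; [apply continuity_plus; apply hdist | apply hconst].
Qed.

Lemma minV_exists (a b x1 x2 : R) : a <= b -> exists m, minV a b x1 x2 m.
Proof.
  intros hab.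
  destruct (continuity_ab_min (fun x => V x x1 x2) a b) as [xm [hmin hxm]];
    [exact hab | intros; apply V_continuous |].
  exists (V xm x1 x2). split; [exists xm; auto|].
  intros y [x [hx ->]]. apply hmin; exact hx.
Qed.

(* Distance s = -ln(q)/2 of the optimal nodes from the ends of [a,b]. *)
Definition gap (a b : R) : R := - ln (qval a b) / 2.

(* q is the root in (E,1) of q^2 + E q = 2E, E = exp(-(b-a)); equivalently
   phi(E/q) = q. *)
Lemma qval_spec (a b : R) : a < b ->
  exp (- (b - a)) < qval a b < 1 /\
  mid_value (exp (- (b - a)) / qval a b) = qval a b.
Proof.
  intros hab.
  set (E := exp (- (b - a))).
  assert (hE0 : 0 < E) by apply exp_pos.
  assert (hE1 : E < 1) by (apply exp_lt_1; lra).
  assert (hq : qval a b = (- E + sqrt (E * E + 8 * E)) / 2).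
  { unfold qval. cbv zeta. fold E.
    replace (exp (-2 * (b - a))) with (E * E); [reflexivity|].
    unfold E. rewrite <- exp_plus. f_equal. ring. }
  rewrite hq. set (S := sqrt (E * E + 8 * E)).
  assert (hS0 : 0 <= S) by apply sqrt_pos.
  assert (hS : S * S = E * E + 8 * E) by (apply sqrt_sqrt; nra).
  assert (hlo : 3 * E < S).
  { destruct (Rle_lt_dec S (3 * E)) as [h | h]; [|exact h].
    assert (S * S <= (3 * E) * (3 * E)) by (apply Rmult_le_compat; lra). nra. }
  assert (hhi : S < 2 + E).
  { destruct (Rle_lt_dec (2 + E) S) as [h | h]; [|exact h].
    assert ((2 + E) * (2 + E) <= S * S) by (apply Rmult_le_compat; lra). nra. }
  set (q := (- E + S) / 2).
  assert (hq0 : 0 < q) by (unfold q; lra).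
  assert (hquad : 2 * E = q * q + E * q) by (unfold q; nra).
  split; [unfold q; lra|].
  unfold mid_value.
  replace (2 * (E / q) / (1 + E / q)) with (2 * E / (q + E)) by (field; lra).
  rewrite hquad. field. lra.
Qed.

Lemma gap_spec (a b : R) : a < b ->
  0 < gap a b /\ 2 * gap a b < b - a /\
  exp (-2 * gap a b) = qval a b /\
  mid_value (exp (-2 * ((b - a) / 2 - gap a b))) = qval a b.
Proof.
  intros hab. destruct (qval_spec a b hab) as [[hEq hq1] hfix].
  assert (hq0 : 0 < qval a b) by (pose proof (exp_pos (- (b - a))); lra).
  assert (hln : - (b - a) < ln (qval a b) < 0).
  { rewrite <- ln_1, <- (ln_exp (- (b - a))).
    split; apply ln_increasing; auto using exp_pos. }
  assert (hexp : exp (-2 * gap a b) = qval a b)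
    by (unfold gap; replace (-2 * (- ln (qval a b) / 2)) with (ln (qval a b))
          by field; apply exp_ln; exact hq0).
  split; [unfold gap; lra|]. split; [unfold gap; lra|]. split; [exact hexp|].
  rewrite <- hfix. f_equal. unfold gap.
  replace (-2 * ((b - a) / 2 - - ln (qval a b) / 2))
    with (- (b - a) + - ln (qval a b)) by field.
  rewrite exp_plus, (exp_Ropp (ln _)), exp_ln by exact hq0. reflexivity.
Qed.

Lemma exists_V_le_q (a b x1 x2 : R) : a < b -> x1 <> x2 ->
  exists x, a <= x <= b /\ V x x1 x2 <= qval a b.
Proof.
  intros hab hne.
  destruct (gap_spec a b hab) as (hs & hsL & hexp_s & hmid_t).
  assert (hcase : forall y1 y2, y1 < y2 ->
            exists x, a <= x <= b /\ V x y1 y2 <= qval a b).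
  { intros y1 y2 h12.
    destruct (exists_far_point a b y1 y2 (gap a b) ((b - a) / 2 - gap a b))
      as [x [hx hfar]]; try lra.
    exists x. split; [exact hx|].
    apply (V_le_of_far x y1 y2 (gap a b) ((b - a) / 2 - gap a b));
      [exact h12 | lra | rewrite hexp_s | rewrite hmid_t | exact hfar]; lra. }
  destruct (Rtotal_order x1 x2) as [h | [h | h]]; [auto | contradiction |].
  destruct (hcase x2 x1 h) as [x [hx hV]].
  exists x. rewrite V_sym. auto.
Qed.

Lemma optimal_pair (a b : R) : a < b ->
  (let x1 := a - ln (qval a b) / 2 in
   let x2 := b + ln (qval a b) / 2 in
   a <= x1 /\ x1 < x2 /\ x2 <= b /\ minV a b x1 x2 (qval a b)).
Proof.
  intros hab x1 x2.
  destruct (gap_spec a b hab) as (hs & hsL & hexp_s & hmid_t).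
  assert (hx1 : x1 = a + gap a b) by (unfold x1, gap; lra).
  assert (hx2 : x2 = b - gap a b) by (unfold x2, gap; lra).
  rewrite hx1, hx2 in *.
  repeat split; try lra.
  - exists a. split; [lra|]. rewrite V_left by lra.
    rewrite <- hexp_s. f_equal. ring.
  - intros y [x [hx ->]].
    destruct (Rle_lt_dec x (a + gap a b)) as [h1 | h1].
    { rewrite V_left by lra. rewrite <- hexp_s. apply exp_le. lra. }
    destruct (Rle_lt_dec (b - gap a b) x) as [h2 | h2].
    { rewrite V_right by lra. rewrite <- hexp_s. apply exp_le. lra. }
    rewrite <- hmid_t.
    replace (-2 * ((b - a) / 2 - gap a b))
      with (- (b - gap a b - (a + gap a b))) by field.
    apply mid_le_V; lra.
Qed.

Theorem mainTheorem8 (a b : R) (hab : a < b) :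
  (* the minimum over [a,b] exists for every admissible pair *)
  (forall x1 x2, x1 <> x2 -> exists m, minV a b x1 x2 m) /\
  (* sup over x1 <> x2 of min_{x in [a,b]} V = q *)
  is_lub (fun s => exists x1 x2, x1 <> x2 /\ minV a b x1 x2 s) (qval a b) /\
  (* attained at x1 = a - ln q / 2, x2 = b + ln q / 2, with a <= x1 < x2 <= b *)
  (let x1 := a - ln (qval a b) / 2 in
   let x2 := b + ln (qval a b) / 2 in
   a <= x1 /\ x1 < x2 /\ x2 <= b /\ minV a b x1 x2 (qval a b)).
Proof.
  pose proof (optimal_pair a b hab) as hopt.
  split; [intros x1 x2 _; apply minV_exists; lra|].
  split; [split|exact hopt].
  - intros m [x1 [x2 [hne [_ hmin]]]].
    destruct (exists_V_le_q a b x1 x2 hab hne) as [x [hx hV]].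
    eapply Rle_trans; [apply hmin; exists x; split; eauto | exact hV].
  - intros M hM. apply hM.
    destruct hopt as (_ & h12 & _ & hmin).
    eexists; eexists; split; [|exact hmin]. lra.
Qed.
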